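(* Let $\varphi$ be a formula in variables $x_1,\dots,x_n$ and let $p$ be a variable distinct from $x_1,\dots,x_n$. Define the single $p$-negation transform $\varphi^{p}$ of $\varphi$ to be the formula obtained by replacing each occurrence of each variable $x_i$ by $(x_i\Rightarrow p)$ and each occurrence of the constant $\mathbf{0}$ by $p$, leaving $\vee,\wedge,\Rightarrow$ and $\mathbf{1}$ unchanged. If $\varphi$ is a subset tautology, then $\varphi^{p}$ is a partition tautology. In particular, the weak law of excluded middle $(x\Rightarrow p)\vee((x\Rightarrow p)\Rightarrow p)$ is a partition tautology.
   Context: Formulas are built from variables and the constants $\mathbf{0},\mathbf{1}$ using the binary connectives $\vee,\wedge,\Rightarrow$. A formula is a subset tautology if, for every nonempty set $U$ and every assignment of subsets of $U$ to the variables, it evaluates to $U$ when $\vee,\wedge$ are interpreted as $\cup,\cap$, $S\Rightarrow T$ as $(U\setminus S)\cup T$, $\mathbf{0}$ as $\emptyset$ and $\mathbf{1}$ as $U$. A partition on a set $U$ is a set of non-empty, pairwise disjoint subsets of $U$ (called blocks) whose union is $U$. The discrete partition is $\mathbf{1}=\{\{u\}:u\in U\}$ and the indiscrete partition is $\mathbf{0}=\{U\}$. The join $\pi\vee\sigma$ is the partition whose blocks are the non-empty intersections $B\cap C$, $B\in\pi$, $C\in\sigma$. The meet $\pi\wedge\sigma$ is the partition whose blocks are the equivalence classes of the equivalence relation on $U$ generated by: $u\sim u'$ if $u,u'$ lie in a common block of $\pi$ or in a common block of $\sigma$. The partition implication $\sigma\Rightarrow\pi$ is the partition obtained from $\pi$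 by replacing every block $B\in\pi$ that is contained in some block of $\sigma$ by the singletons $\{u\}$, $u\in B$, and leaving every block of $\pi$ not contained in any block of $\sigma$ unchanged. A formula is a partition tautology if, for every set $U$ with $|U|\ge 2$ and every assignment of partitions on $U$ to the variables, it evaluates to $\mathbf{1}$ when $\vee,\wedge,\Rightarrow,\mathbf{0},\mathbf{1}$ are interpreted as the partition join, meet, implication, indiscrete and discrete partitions. *)

From Stdlib Require Import Relations.Relation_Operators.

Inductive form : Type :=
| Var : nat -> form
| FZero : form
| FOne : form
| FOr : form -> form -> form
| FAnd : form -> form -> form
| FImp : form -> form -> form.

Fixpoint occurs (p : nat) (f : form) : Prop :=
  match f with
  | Var i => i = p
  | FZero | FOne => False
  | FOr a b | FAnd a b | FImp a b => occurs p a \/ occurs p b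
  end.

Fixpoint pneg (p : nat) (f : form) : form :=
  match f with
  | Var i => FImp (Var i) (Var p)
  | FZero => Var p
  | FOne => FOne
  | FOr a b => FOr (pneg p a) (pneg p b)
  | FAnd a b => FAnd (pneg p a) (pneg p b)
  | FImp a b => FImp (pneg p a) (pneg p b)
  end.

Fixpoint seval {U : Type} (v : nat -> U -> Prop) (f : form) : U -> Prop :=
  match f with
  | Var i => v i
  | FZero => fun _ => False
  | FOne => fun _ => True
  | FOr a b => fun u => seval v a u \/ seval v b u
  | FAnd a b => fun u => seval v a u /\ seval v b u
  | FImp a b => fun u => ~ seval v a u \/ seval v b u
  end.

Definition subset_taut (f : form) : Prop :=
  forall (U : Type), inhabited U -> forall (v : nat -> U -> Prop),
    forall u : U, seval v f u.

Definition partn (U : Type) := (U -> Prop) -> Prop.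

Definition is_partition {U : Type} (P : partn U) : Prop :=
  (forall B, P B -> exists u, B u) /\
  (forall B C, P B -> P C -> (exists u, B u /\ C u) -> B = C) /\
  (forall u, exists B, P B /\ B u).

Definition discrete (U : Type) : partn U :=
  fun B => exists u, B = (fun w => w = u).

Definition indiscrete (U : Type) : partn U :=
  fun B => B = (fun _ => True).

Definition pjoin {U : Type} (pi sigma : partn U) : partn U :=
  fun D => exists B C, pi B /\ sigma C /\ (exists u, B u /\ C u) /\
           D = (fun u => B u /\ C u).

Definition same_block {U : Type} (pi sigma : partn U) (u u' : U) : Prop :=
  exists B, (pi B \/ sigma B) /\ B u /\ B u'.

Definition pmeet {U : Type} (pi sigma : partn U) : partn U :=
  fun D => exists u, D = (fun w => clos_refl_sym_trans U (same_block pi sigma) u w).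

Definition pimp {U : Type} (sigma pi : partn U) : partn U :=
  fun D =>
    (pi D /\ ~ (exists C, sigma C /\ forall u, D u -> C u)) \/
    (exists B u, pi B /\ (exists C, sigma C /\ forall w, B w -> C w) /\ B u /\
                 D = (fun w => w = u)).

Fixpoint peval {U : Type} (v : nat -> partn U) (f : form) : partn U :=
  match f with
  | Var i => v i
  | FZero => indiscrete U
  | FOne => discrete U
  | FOr a b => pjoin (peval v a) (peval v b)
  | FAnd a b => pmeet (peval v a) (peval v b)
  | FImp a b => pimp (peval v a) (peval v b)
  end.

Definition partition_taut (f : form) : Prop :=
  forall (U : Type), (exists a b : U, a <> b) ->
  forall (v : nat -> partn U), (forall i, is_partition (v i)) ->
    peval v f = discrete U.

From Stdlib Require Import Relations.Relation_Operators Classical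
  FunctionalExtensionality PropExtensionality.

(* Fix partitions [v i] of [U] and write
   [P := v p].  Call a subset [S] of [U] P-saturated if it is a union of
   blocks of [P], and let [discretize P S] be the partition that splits every
   block inside [S] into singletons and keeps the blocks of [P] outside [S].

   On partitions of this shape the partition operations mirror the subset
   operations: join, meet and implication of [discretize P S] and
   [discretize P T] are [discretize P] of union, intersection and subset
   implication of [S] and [T]; [P] itself is [discretize P] of the empty set and
   the discrete partition is [discretize P] of [U].  Moreover [x => p]
   evaluates to [discretize P S_x], where [S_x] is the union of the blocks of
   [P] lying inside a block of [v x].  By induction on [phi], the transform
   [phi^p] evaluates to [discretize P S] where [S] is the subset value of [phi]
   under [x |-> S_x]; if [phi] is a subset tautology then [S = U], so [phi^p]
   evaluates to the discrete partition.  The weak excluded middle is the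
   transform of the classical tautology [x \/ (x => 0)]. *)

Lemma set_ext {U : Type} (X Y : U -> Prop) : (forall w, X w <-> Y w) -> X = Y.
Proof.
  intro H; apply functional_extensionality; intro w.
  apply propositional_extensionality; auto.
Qed.

Definition block_family {U : Type} (R : partn U) : Prop :=
  (forall B, R B -> exists u, B u) /\
  (forall B C u, R B -> R C -> B u -> C u -> B = C).

Lemma partition_block_family {U : Type} (P : partn U) :
  is_partition P -> block_family P.
Proof.
  intros [Hne [Hdisj _]]. split; [exact Hne |].
  intros B C u PB PC Bu Cu. apply Hdisj; eauto.
Qed.

(* A covering family contained in a disjoint family of nonempty blocks equals
   it: every block of the larger family already meets a block of the smaller. *)
Lemma eq_of_incl {U : Type} (Q R : partn U) :
  (forall u, exists B, Q B /\ B u) -> block_family R ->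
  (forall X, Q X -> R X) -> Q = R.
Proof.
  intros Hcov [Hne Hdisj] Hincl. apply set_ext. intro X. split; [apply Hincl |].
  intro RX. destruct (Hne X RX) as [u Xu].
  destruct (Hcov u) as [B [QB Bu]].
  rewrite <- (Hdisj B X u (Hincl B QB) RX Bu Xu). exact QB.
Qed.

Lemma pjoin_block_family {U : Type} (pi sigma : partn U) :
  block_family pi -> block_family sigma -> block_family (pjoin pi sigma).
Proof.
  intros [_ Hpi] [_ Hsig]. split.
  - intros D [B [C [_ [_ [[u BCu] ->]]]]]. exists u; exact BCu.
  - intros D D' u [B [C [PB [SC [_ ->]]]]] [B' [C' [PB' [SC' [_ ->]]]]]
      [Bu Cu] [B'u C'u].
    rewrite (Hpi B B' u PB PB' Bu B'u), (Hsig C C' u SC SC' Cu C'u).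
    reflexivity.
Qed.

(* The blocks of a meet are equivalence classes, hence disjoint or equal. *)
Lemma pmeet_block_family {U : Type} (pi sigma : partn U) :
  block_family (pmeet pi sigma).
Proof.
  split.
  - intros D [u ->]. exists u. apply rst_refl.
  - intros D D' w [u ->] [u' ->] Huw Hu'w.
    assert (Huu' : clos_refl_sym_trans U (same_block pi sigma) u u')
      by (apply rst_trans with w; [exact Huw | apply rst_sym; exact Hu'w]).
    apply set_ext. intro z. split; intro H.
    + apply rst_trans with u; [apply rst_sym; exact Huu' | exact H].
    + apply rst_trans with u'; [exact Huu' | exact H].
Qed.

(* In an implication, a kept block of [pi] cannot meet a singleton coming from
   a split block of [pi], since both would be the same block of [pi]. *)
Lemma pimp_block_family {U : Type} (sigma pi : partn U) :
  block_family pi -> block_family (pimp sigma pi).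
Proof.
  intros [Hne Hdisj].
  assert (Hmix : forall D B u, pi D ->
            ~ (exists C, sigma C /\ forall w, D w -> C w) ->
            pi B -> (exists C, sigma C /\ forall w, B w -> C w) ->
            B u -> ~ D u).
  { intros D B u PD nD PB HB Bu Du. apply nD.
    rewrite (Hdisj D B u PD PB Du Bu). exact HB. }
  split.
  - intros D [[PD _] | [B [u [_ [_ [_ ->]]]]]].
    + exact (Hne D PD).
    + exists u; reflexivity.
  - intros D D' w [[PD nD] | [B [u [PB [HB [Bu ->]]]]]]
      [[PD' nD'] | [B' [u' [PB' [HB' [B'u' ->]]]]]] Dw D'w;
      simpl in Dw, D'w.
    + exact (Hdisj D D' w PD PD' Dw D'w).
    + subst w. exfalso. exact (Hmix D B' u' PD nD PB' HB' B'u' Dw).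
    + subst w. exfalso. exact (Hmix D' B u PD' nD' PB HB Bu D'w).
    + subst. reflexivity.
Qed.

Definition saturated {U : Type} (P : partn U) (S : U -> Prop) : Prop :=
  forall B u w, P B -> B u -> B w -> S u -> S w.

Definition discretize {U : Type} (P : partn U) (S : U -> Prop) : partn U :=
  fun X => (exists u, S u /\ X = (fun w => w = u)) \/
           (P X /\ exists u, X u /\ ~ S u).

Definition inner {U : Type} (sigma P : partn U) : U -> Prop :=
  fun u => exists B C, P B /\ B u /\ sigma C /\ (forall w, B w -> C w).

Section Discretize.
Context {U : Type} (P : partn U) (HP : is_partition P).

Lemma saturated_compl (S : U -> Prop) :
  saturated P S -> saturated P (fun u => ~ S u).
Proof. intros HS B u w PB Bu Bw nSu Sw. exact (nSu (HS B w u PB Bw Bu Sw)). Qed.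

Lemma inner_saturated (sigma : partn U) : saturated P (inner sigma P).
Proof.
  intros B u w PB Bu Bw [B' [C [PB' [B'u [SC HC]]]]].
  destruct (partition_block_family P HP) as [_ Hdisj].
  rewrite <- (Hdisj B B' u PB PB' Bu B'u) in HC.
  exists B, C; auto.
Qed.

Lemma discretize_cover (S : U -> Prop) :
  forall u, exists X, discretize P S X /\ X u.
Proof.
  intro u. destruct (classic (S u)) as [Su | nSu].
  - exists (fun w => w = u). split; [left; eauto | reflexivity].
  - destruct HP as [_ [_ Hcov]]. destruct (Hcov u) as [B [PB Bu]].
    exists B. split; [right; eauto | exact Bu].
Qed.

Lemma discretize_block_in (S : U -> Prop) X x :
  saturated P S -> discretize P S X -> X x -> S x -> X = (fun w => w = x).
Proof.
  intros HS [[a [_ ->]] | [PX [c [Xc nSc]]]] Xx Sx.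
  - simpl in Xx. subst. reflexivity.
  - exfalso. exact (nSc (HS X x c PX Xx Xc Sx)).
Qed.

(* For saturated [S], the blocks of [discretize P S] are disjoint: a singleton
   inside [S] cannot meet a kept block, which lies outside [S]. *)
Lemma discretize_block_family (S : U -> Prop) :
  saturated P S -> block_family (discretize P S).
Proof.
  intro HS. destruct (partition_block_family P HP) as [_ Hdisj]. split.
  - intros X [[u [_ ->]] | [_ [u [Xu _]]]]; exists u; [reflexivity | exact Xu].
  - intros X Y w [[a [Sa ->]] | [PX [x [Xx nSx]]]] HY Xw Yw; simpl in Xw.
    + subst w. symmetry. exact (discretize_block_in S Y a HS HY Yw Sa).
    + destruct HY as [[b [Sb ->]] | [PY _]]; simpl in Yw.
      * subst w. exfalso. exact (nSx (HS X b x PX Xw Xx Sb)).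
      * exact (Hdisj X Y w PX PY Xw Yw).
Qed.

Lemma discretize_empty : discretize P (fun _ => False) = P.
Proof.
  apply set_ext. intro X. split.
  - intros [[u [[] _]] | [PX _]]. exact PX.
  - intro PX. right. split; [exact PX |].
    destruct (proj1 HP X PX) as [x Xx]. eauto.
Qed.

Lemma discretize_full : discretize P (fun _ => True) = discrete U.
Proof.
  apply set_ext. intro X. split.
  - intros [[u [_ E]] | [_ [u [_ H]]]]; [exists u; exact E | exfalso; auto].
  - intros [u E]. left; eauto.
Qed.

Lemma pimp_inner (sigma : partn U) :
  pimp sigma P = discretize P (inner sigma P).
Proof.
  destruct (partition_block_family P HP) as [Hne Hdisj].
  apply set_ext. intro X. split.
  - intros [[PX nC] | [B [u [PB [[C [SC BC]] [Bu ->]]]]]].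
    + right. split; [exact PX |]. destruct (Hne X PX) as [x Xx].
      exists x. split; [exact Xx |]. intros [B [C [PB [Bx [SC HC]]]]].
      rewrite <- (Hdisj X B x PX PB Xx Bx) in HC. eauto.
    + left. exists u. split; [exists B, C; auto | reflexivity].
  - intros [[u [[B [C [PB [Bu [SC HC]]]]] ->]] | [PX [x [Xx nS]]]].
    + right. exists B, u. repeat split; [exact PB | exists C; auto | exact Bu].
    + left. split; [exact PX |]. intros [C [SC HC]]. apply nS. exists X, C; auto.
Qed.

End Discretize.

Section Connectives.
Context {U : Type} (P : partn U) (HP : is_partition P)
  (S T : U -> Prop) (HS : saturated P S) (HT : saturated P T).

Lemma pjoin_discretize :
  pjoin (discretize P S) (discretize P T) =
  discretize P (fun u => S u \/ T u).
Proof.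
  symmetry. apply eq_of_incl.
  - exact (discretize_cover P HP _).
  - apply pjoin_block_family; apply discretize_block_family; assumption.
  - intros X [[a [[Sa | Ta] ->]] | [PX [x [Xx nST]]]].
    + destruct (discretize_cover P HP T a) as [C [DC Ca]].
      exists (fun w => w = a), C. split; [left; eauto |].
      split; [exact DC | split; [eauto |]].
      apply set_ext. intro w. split; [intros ->; auto | tauto].
    + destruct (discretize_cover P HP S a) as [B [DB Ba]].
      exists B, (fun w => w = a). split; [exact DB |].
      split; [left; eauto | split; [eauto |]].
      apply set_ext. intro w. split; [intros ->; auto | tauto].
    + exists X, X.
      split; [right; split; [exact PX | exists x; tauto] |].
      split; [right; split; [exact PX | exists x; tauto] |].
      split; [eauto |]. apply set_ext. intro w. tauto.
Qed.

Definition meet_linked (u w : U) : Prop :=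
  u = w \/ exists B, P B /\ B u /\ B w /\ ~ (S u /\ T u).

(* Symmetry uses saturation: [u] and [w] lie in the same blocks of [P]. *)
Lemma meet_linked_sym : forall u w, meet_linked u w -> meet_linked w u.
Proof.
  intros u w [-> | [B [PB [Bu [Bw nST]]]]]; [left; reflexivity | right].
  exists B. repeat split; [exact PB | exact Bw | exact Bu |].
  intros [Sw Tw]. exact (nST (conj (HS B w u PB Bw Bu Sw) (HT B w u PB Bw Bu Tw))).
Qed.

Lemma meet_class :
  forall u w,
    clos_refl_sym_trans U (same_block (discretize P S) (discretize P T)) u w <->
    meet_linked u w.
Proof.
  destruct (partition_block_family P HP) as [_ Hdisj].
  intros u w. split.
  - intro H. induction H as [x y Hxy | x | x y _ IH | x y z _ IH1 _ IH2].
    + destruct Hxy as [B [[DB | DB] [Bx By]]];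
        destruct DB as [[a [_ ->]] | [PB [c [Bc nc]]]]; simpl in Bx, By.
      * left; congruence.
      * right. exists B. repeat split; auto. intros [Sx _].
        exact (nc (HS B x c PB Bx Bc Sx)).
      * left; congruence.
      * right. exists B. repeat split; auto. intros [_ Tx].
        exact (nc (HT B x c PB Bx Bc Tx)).
    + left; reflexivity.
    + exact (meet_linked_sym x y IH).
    + destruct IH1 as [-> | [B [PB [Bx [By nST]]]]]; [exact IH2 |].
      destruct IH2 as [<- | [C [PC [Cy [Cz _]]]]]; [right; exists B; auto |].
      rewrite <- (Hdisj B C y PB PC By Cy) in Cz.
      right; exists B; auto.
  - intros [-> | [B [PB [Bu [Bw nST]]]]]; [apply rst_refl |].
    apply rst_step. exists B. split; [| split; assumption].
    destruct (classic (S u)) as [Su | nSu].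
    + right. right. split; [exact PB |]. exists u. split; [exact Bu | tauto].
    + left. right. split; [exact PB |]. exists u. split; [exact Bu | exact nSu].
Qed.

Lemma pmeet_discretize :
  pmeet (discretize P S) (discretize P T) =
  discretize P (fun u => S u /\ T u).
Proof.
  destruct (partition_block_family P HP) as [_ Hdisj].
  symmetry. apply eq_of_incl.
  - exact (discretize_cover P HP _).
  - apply pmeet_block_family.
  - intros X [[a [STa ->]] | [PX [x [Xx nST]]]]; [exists a | exists x];
      apply set_ext; intro w; rewrite meet_class.
    + split; [intros ->; left; reflexivity |].
      intros [-> | [_ [_ [_ [_ nST]]]]]; [reflexivity | contradiction].
    + split; [intro Xw; right; exists X; auto |].
      intros [<- | [C [PC [Cx [Cw _]]]]]; [exact Xx |].
      rewrite (Hdisj X C x PX PC Xx Cx). exact Cw.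
Qed.

Lemma pimp_discretize :
  pimp (discretize P S) (discretize P T) =
  discretize P (fun u => ~ S u \/ T u).
Proof.
  symmetry. apply eq_of_incl.
  - exact (discretize_cover P HP _).
  - apply pimp_block_family, discretize_block_family; assumption.
  - intros X [[a [HST ->]] | [PX [x [Xx nHST]]]].
    + (* a singleton comes from splitting the [discretize P T]-block of [a],
         which lies inside a block of [discretize P S] *)
      right. destruct (classic (T a)) as [Ta | nTa].
      * destruct (discretize_cover P HP S a) as [C [DC Ca]].
        exists (fun w => w = a), a. split; [left; eauto |].
        split; [exists C; split; [exact DC | intros w ->; exact Ca] |].
        split; reflexivity.
      * assert (nSa : ~ S a) by tauto.
        destruct (proj2 (proj2 HP) a) as [B [PB Ba]].
        exists B, a. split; [right; split; [exact PB | eauto] |].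
        split; [exists B; split; [right; split; [exact PB | eauto] | auto] |].
        split; [exact Ba | reflexivity].
    + (* a kept block of [P] lies in [S] but not in [T]; it is split only
         when it is itself a singleton *)
      assert (Sx : S x) by tauto.
      assert (DX : discretize P T X) by (right; split; [exact PX | exists x; tauto]).
      destruct (classic (exists C, discretize P S C /\ forall w, X w -> C w))
        as [[C [DC XC]] | nC].
      * right. exists X, x. split; [exact DX | split; [exists C; auto | split; [exact Xx |]]].
        rewrite (discretize_block_in P S C x HS DC (XC x Xx) Sx) in XC.
        apply set_ext. intro w. split; [apply XC | intros ->; exact Xx].
      * left. split; [exact DX | exact nC].
Qed.

End Connectives.

Definition inner_value {U : Type} (v : nat -> partn U) (p : nat) (phi : form) :
  U -> Prop :=
  seval (fun i => inner (v i) (v p)) phi.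

Section Transform.
Context {U : Type} (v : nat -> partn U) (p : nat)
  (Hv : forall i, is_partition (v i)).

Lemma inner_value_saturated (phi : form) :
  saturated (v p) (inner_value v p phi).
Proof.
  unfold inner_value.
  induction phi as [i | | | a IHa b IHb | a IHa b IHb | a IHa b IHb]; simpl.
  - exact (inner_saturated (v p) (Hv p) (v i)).
  - intros B u w _ _ _ [].
  - intros B u w _ _ _ _; exact I.
  - intros B u w PB Bu Bw [Ha | Hb];
      [left; exact (IHa B u w PB Bu Bw Ha) | right; exact (IHb B u w PB Bu Bw Hb)].
  - intros B u w PB Bu Bw [Ha Hb].
    exact (conj (IHa B u w PB Bu Bw Ha) (IHb B u w PB Bu Bw Hb)).
  - intros B u w PB Bu Bw [Ha | Hb];
      [left; exact (saturated_compl (v p) _ IHa B u w PB Bu Bw Ha)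
      | right; exact (IHb B u w PB Bu Bw Hb)].
Qed.

Lemma peval_pneg (phi : form) :
  peval v (pneg p phi) = discretize (v p) (inner_value v p phi).
Proof.
  assert (HP := Hv p).
  induction phi as [i | | | a IHa b IHb | a IHa b IHb | a IHa b IHb]; simpl.
  - exact (pimp_inner (v p) HP (v i)).
  - symmetry. exact (discretize_empty (v p) HP).
  - symmetry. exact (discretize_full (v p)).
  - rewrite IHa, IHb.
    exact (pjoin_discretize (v p) HP _ _ (inner_value_saturated a) (inner_value_saturated b)).
  - rewrite IHa, IHb.
    exact (pmeet_discretize (v p) HP _ _ (inner_value_saturated a) (inner_value_saturated b)).
  - rewrite IHa, IHb.
    exact (pimp_discretize (v p) HP _ _ (inner_value_saturated a) (inner_value_saturated b)).
Qed.

End Transform.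

Lemma pneg_partition_taut (phi : form) (p : nat) :
  subset_taut phi -> partition_taut (pneg p phi).
Proof.
  intros Htaut U [a _] v Hv.
  rewrite (peval_pneg v p Hv phi).
  assert (Hfull : inner_value v p phi = (fun _ => True)).
  { apply set_ext. intro u. split; [trivial | intros _; exact (Htaut U (inhabits a) _ u)]. }
  rewrite Hfull. apply discretize_full.
Qed.

Theorem mainTheorem9 :
  (forall (phi : form) (p : nat), ~ occurs p phi ->
     subset_taut phi -> partition_taut (pneg p phi)) /\
  (forall x p : nat, x <> p ->
     partition_taut (FOr (FImp (Var x) (Var p))
                         (FImp (FImp (Var x) (Var p)) (Var p)))).
Proof.
  split.
  - intros phi p _. apply pneg_partition_taut.
  -
    intros x p _.
    change (partition_taut (pneg p (FOr (Var x) (FImp (Var x) FZero)))).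
    apply pneg_partition_taut.
    intros U _ v u. simpl. destruct (classic (v x u)); auto.
Qed.
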